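(* Let $t:\mathcal{L}_{FH}\to\mathcal{L}_{AIL}$ be defined by $t(p)=p$, $t(\neg\varphi)=\neg t(\varphi)$, $t(\varphi\wedge\psi)=t(\varphi)\wedge t(\psi)$, $t(A_i\varphi)=A_i t(\varphi)$, $t(I_i\varphi)=I_i t(\varphi)$, $t(E_i\varphi)=A_i t(\varphi)\wedge I_i t(\varphi)$. Then for every $\varphi\in\mathcal{L}_{FH}$, $\varphi$ is valid with respect to $\vDash_{FH}$ (true at every world of every epistemic model with awareness) iff $t(\varphi)$ is valid with respect to $\vDash_{AIL}$.
   Context: Let $\mathcal{P}$ be a countable set of atomic propositions and $\mathcal{G}$ a finite set of agents. An epistemic model with awareness is $M=\langle W,\{\sim_i,\mathscr{A}_i\}_{i\in\mathcal{G}},V\rangle$ where $W\neq\emptyset$, each $\sim_i$ is an equivalence relation on $W$, each $\mathscr{A}_i:W\to 2^{\mathcal{P}}$ satisfies $\mathscr{A}_i(w)=\mathscr{A}_i(v)$ whenever $(w,v)\in\sim_i$, and $V:\mathcal{P}\to 2^W$. The A-equivalence relation $\approx_i$: $(w,v)\in\approx_i$ iff $\mathscr{A}_i(w)=\mathscr{A}_i(v)$ and for every $p\in\mathscr{A}_i(w)$, $w\in V(p)$ iff $v\in V(p)$. $\sim_i\circ\approx_i=\{(w,v):\exists t\,((w,t)\in\approx_i,(t,v)\in\sim_i)\}$; $R^+$ is the transitive closure. $\mathcal{L}_{AIL}$: $\varphi::=p\mid\neg\varphi\mid\varphi\wedge\varphi\mid A_i\varphi\mid I_i\varphi\mid E_i\varphi\mid[\approx]_i\varphi\mid[\circ^+]_i\varphi$;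 $\mathcal{L}_{FH}$ is the fragment without $[\approx]_i,[\circ^+]_i$. $At(\varphi)$: atoms occurring in $\varphi$. $\vDash_{AIL}$: $M,w\vDash p$ iff $w\in V(p)$; Boolean clauses usual; $A_i\varphi$ iff $At(\varphi)\subseteq\mathscr{A}_i(w)$; $I_i\varphi$ iff $\varphi$ holds at all $\sim_i$-successors; $[\approx]_i\varphi$ iff $\varphi$ holds at all $\approx_i$-successors; $[\circ^+]_i\varphi$ iff $\varphi$ holds at all $(\sim_i\circ\approx_i)^+$-successors; $E_i\varphi$ iff $A_i\varphi$ and $[\circ^+]_i\varphi$ hold at $w$. $\vDash_{FH}$ on $\mathcal{L}_{FH}$ is the same except $M,w\vDash_{FH}E_i\varphi$ iff $M,w\vDash_{FH}A_i\varphi$ and $M,w\vDash_{FH}I_i\varphi$. *)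

From mathcomp Require Import all_boot.
From Stdlib Require Import Relations.

Set Implicit Arguments.
Unset Strict Implicit.
Unset Printing Implicit Defensive.

Section Logic.
Variables (P : countType) (G : finType).

Inductive fAIL : Type :=
| AAtom : P -> fAIL
| ANeg : fAIL -> fAIL
| AAnd : fAIL -> fAIL -> fAIL
| AAw : G -> fAIL -> fAIL
| AInf : G -> fAIL -> fAIL
| AEx : G -> fAIL -> fAIL
| AApprox : G -> fAIL -> fAIL
| ACircP : G -> fAIL -> fAIL.

Inductive fFH : Type :=
| FAtom : P -> fFH
| FNeg : fFH -> fFH
| FAnd : fFH -> fFH -> fFH
| FAw : G -> fFH -> fFH
| FInf : G -> fFH -> fFH
| FEx : G -> fFH -> fFH.

Fixpoint atAIL (phi : fAIL) (p : P) : Prop :=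
  match phi with
  | AAtom q => p = q
  | ANeg a => atAIL a p
  | AAnd a b => atAIL a p \/ atAIL b p
  | AAw _ a | AInf _ a | AEx _ a | AApprox _ a | ACircP _ a => atAIL a p
  end.

Fixpoint atFH (phi : fFH) (p : P) : Prop :=
  match phi with
  | FAtom q => p = q
  | FNeg a => atFH a p
  | FAnd a b => atFH a p \/ atFH b p
  | FAw _ a | FInf _ a | FEx _ a => atFH a p
  end.

Record model : Type := Model {
  W : Type;
  W_nonempty : inhabited W;
  sim : G -> relation W;
  sim_equiv : forall i, equivalence W (sim i);
  aw : G -> W -> P -> Prop;
  aw_sim : forall i w v, sim i w v -> forall p, aw i w p <-> aw i v p;
  val : P -> W -> Prop
}.

Definition approx (M : model) (i : G) (w v : W M) : Prop :=
  (forall p, aw i w p <-> aw i v p) /\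
  (forall p, aw i w p -> (val p w <-> val p v)).

Definition comp (M : model) (i : G) (w v : W M) : Prop :=
  exists t, approx i w t /\ sim i t v.

Definition compT (M : model) (i : G) : relation (W M) :=
  clos_trans (W M) (comp i).

Fixpoint satAIL (M : model) (w : W M) (phi : fAIL) : Prop :=
  match phi with
  | AAtom p => val p w
  | ANeg a => ~ satAIL w a
  | AAnd a b => satAIL w a /\ satAIL w b
  | AAw i a => forall p, atAIL a p -> aw i w p
  | AInf i a => forall v, sim i w v -> satAIL v a
  | AEx i a => (forall p, atAIL a p -> aw i w p) /\
               (forall v, compT i w v -> satAIL v a)
  | AApprox i a => forall v, approx i w v -> satAIL v a
  | ACircP i a => forall v, compT i w v -> satAIL v a
  end.

Fixpoint satFH (M : model) (w : W M) (phi : fFH) : Prop :=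
  match phi with
  | FAtom p => val p w
  | FNeg a => ~ satFH w a
  | FAnd a b => satFH w a /\ satFH w b
  | FAw i a => forall p, atFH a p -> aw i w p
  | FInf i a => forall v, sim i w v -> satFH v a
  | FEx i a => (forall p, atFH a p -> aw i w p) /\
               (forall v, sim i w v -> satFH v a)
  end.

Definition validAIL (phi : fAIL) : Prop :=
  forall (M : model) (w : W M), satAIL w phi.

Definition validFH (phi : fFH) : Prop :=
  forall (M : model) (w : W M), satFH w phi.

Fixpoint tr (phi : fFH) : fAIL :=
  match phi with
  | FAtom p => AAtom p
  | FNeg a => ANeg (tr a)
  | FAnd a b => AAnd (tr a) (tr b)
  | FAw i a => AAw i (tr a)
  | FInf i a => AInf i (tr a)
  | FEx i a => AAnd (AAw i (tr a)) (AInf i (tr a))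
  end.

End Logic.

From mathcomp Require Import all_boot.
From Stdlib Require Import Setoid.

Section Translation.
Variables (P : countType) (G : finType).

Lemma atAIL_tr (phi : fFH P G) (p : P) : atAIL (tr phi) p <-> atFH phi p.
Proof. induction phi; simpl; tauto. Qed.

Lemma satAIL_tr (M : model P G) (phi : fFH P G) (w : W M) :
  satAIL w (tr phi) <-> satFH w phi.
Proof.
  revert w; induction phi as [p|a IH|a IHa b IHb|i a IH|i a IH|i a IH];
    intros w; simpl.
  - reflexivity.
  - now rewrite IH.
  - now rewrite IHa IHb.
  - now setoid_rewrite atAIL_tr.
  - now setoid_rewrite IH.
  - now setoid_rewrite atAIL_tr; setoid_rewrite IH.
Qed.

End Translation.

Theorem theorem2 (P : countType) (G : finType) (phi : fFH P G) :
  validFH phi <-> validAIL (tr phi).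
Proof.
  split; intros Hvalid M w.
  - apply satAIL_tr, Hvalid.
  - apply satAIL_tr, Hvalid.
Qed.
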